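(* With the notation below, $\hat G=\hat K_{x_0}\hat B$, i.e. every $g\in\hat G$ can be written $g=kb$ with $k\in\hat K_{x_0}$ and $b\in\hat B$.
   Context: Let $F$ be a non-archimedean local field with ring of integers $\mathfrak{o}$, uniformizer $\varpi$, and finite residue field of cardinality $q$. $X=X_{PGL_2(F)}$ is the Bruhat–Tits tree of $PGL_2(F)$: vertices are homothety classes of $\mathfrak{o}$-lattices in $F^2$, with $[L],[L']$ adjacent iff there are representatives with $\varpi L\subsetneq L'\subsetneq L$; it is $(q+1)$-regular. $d$ is the path-length distance; $\mathrm{Aut}(X)$ is the group of distance-preserving bijections of the vertex set with the topology of pointwise convergence, and $PGL_2(F)\hookrightarrow\mathrm{Aut}(X)$ via the linear action on lattices. For an edge $\eta=\{y_1,y_2\}$ and $e\ge1$, $B(\eta,e)=\{y:\min(d(y,y_1),d(y,y_2))\le e\}$, and $\hat G=\hat G^{(e)}=\{g\in\mathrm{Aut}(X):\forall\eta\ \exists g'\in PGL_2(F),\ g|_{B(\eta,e)}=g'|_{B(\eta,e)}\}$ for a fixed $e\ge1$. Ends are equivalence classes of infinite paths (agreeing after an index shift from some point on). Fix a doubly infinite path $(x_n)_{n\in\mathbb{Z}}$; let $\omega$ be the end of $(x_n)_{n\ge0}$ and $\omega'$ the end of $(x_{-n})_{n\ge0}$. Set $\hat B=\{g\in\hat G: g(\omega)=\omega\}$, $\hat K_{x_0}=\{g\in\hat G: g(x_0)=x_0\}$. *)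

From HB Require Import structures.
From mathcomp Require Import all_boot all_order all_algebra.
Unset Printing Implicit Defensive.
Import Order.TTheory GRing.Theory Num.Theory.
Local Open Scope ring_scope.

Section BTTree.
Variable F : fieldType.
(* normalized discrete valuation; the value at 0 is irrelevant (0 has valuation +oo) *)
Variable val : F -> int.

(* x and y are congruent modulo p^n, i.e. v(x - y) >= n (with v(0) = +oo) *)
Definition close (n : int) (x y : F) : bool := (x == y) || (n <= val (x - y)).

Definition in_o (x : F) : bool := (x == 0) || (0 <= val x).

(* F is a non-archimedean local field with normalized valuation val:
   val is a discrete valuation onto Z, F is complete for it,
   and the residue field o / p is finite. *)
Definition is_nonarch_local_field : Prop :=
  [/\ (forall x y, x != 0 -> y != 0 -> val (x * y) = val x + val y),
      (forall x y, x != 0 -> y != 0 -> x + y != 0 ->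
          (val x <= val (x + y)) || (val y <= val (x + y))),
      (exists pi : F, pi != 0 /\ val pi = 1),
      (forall a : nat -> F,
          (forall n : int, exists N : nat, forall i j, (N <= i)%N -> (N <= j)%N ->
              close n (a i) (a j)) ->
          exists l : F, forall n : int, exists N : nat, forall i, (N <= i)%N ->
              close n (a i) l)
    & (exists s : seq F, forall x, in_o x -> exists2 r, r \in s & close 1 x r)].

Definition vec := 'cV[F]_2.

Definition is_lattice (L : vec -> Prop) : Prop :=
  exists M : 'M[F]_2, M \in unitmx /\
    forall w, L w <-> exists c : vec, (forall i, in_o (c i 0)) /\ w = M *m c.

Definition scale_set (a : F) (L : vec -> Prop) : vec -> Prop :=
  fun v => exists w, L w /\ v = a *: w.

Definition mat_img (A : 'M[F]_2) (L : vec -> Prop) : vec -> Prop :=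
  fun v => exists w, L w /\ v = A *m w.

(* a vertex is a homothety class of lattices *)
Definition is_vertex (C : (vec -> Prop) -> Prop) : Prop :=
  exists L0, is_lattice L0 /\
    forall L, C L <-> exists a : F, a != 0 /\ forall v, L v <-> scale_set a L0 v.

Definition vertex := {C : (vec -> Prop) -> Prop | is_vertex C}.

Definition ssubset (A B : vec -> Prop) : Prop :=
  (forall v, A v -> B v) /\ exists v, B v /\ ~ A v.

Definition adjacent (varpi : F) (x y : vertex) : Prop :=
  exists L L', proj1_sig x L /\ proj1_sig y L' /\
    ssubset (scale_set varpi L) L' /\ ssubset L' L.

Definition walk (varpi : F) (x y : vertex) (n : nat) : Prop :=
  exists s : nat -> vertex, s 0%N = x /\ s n = y /\
    forall i, (i < n)%N -> adjacent varpi (s i) (s i.+1).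

Definition dist (varpi : F) (x y : vertex) (n : nat) : Prop :=
  walk varpi x y n /\ forall m, walk varpi x y m -> (n <= m)%N.

Definition is_aut (varpi : F) (g : vertex -> vertex) : Prop :=
  bijective g /\ forall x y n, dist varpi x y n <-> dist varpi (g x) (g y) n.

Definition pgl_act (A : 'M[F]_2) (x y : vertex) : Prop :=
  exists L, proj1_sig x L /\ proj1_sig y (mat_img A L).

Definition in_ball (varpi : F) (y1 y2 : vertex) (e : nat) (y : vertex) : Prop :=
  exists n, (n <= e)%N /\ (dist varpi y y1 n \/ dist varpi y y2 n).

Definition in_Ghat (varpi : F) (e : nat) (g : vertex -> vertex) : Prop :=
  is_aut varpi g /\
  forall y1 y2, adjacent varpi y1 y2 ->
    exists A : 'M[F]_2, A \in unitmx /\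
      forall y, in_ball varpi y1 y2 e y -> pgl_act A y (g y).

Definition biinf_path (varpi : F) (x : int -> vertex) : Prop :=
  forall n : int, adjacent varpi (x n) (x (n + 1)) /\ x (n - 1) <> x (n + 1).

(* g fixes the end omega of the ray (x_n)_{n >= 0}: the rays (g x_n) and (x_n)
   agree after an index shift *)
Definition fixes_end (x : int -> vertex) (g : vertex -> vertex) : Prop :=
  exists a b : nat, forall n : nat, g (x (n + a)%N%:Z) = x (n + b)%N%:Z.

End BTTree.

From HB Require Import structures.
From mathcomp Require Import all_boot all_order all_algebra.
From mathcomp Require Import zify ring.
From Stdlib Require Import ProofIrrelevance FunctionalExtensionality PropExtensionality ClassicalEpsilon.
Import Order.TTheory GRing.Theory Num.Theory.
Local Open Scope ring_scope.

(* The factor b is taken in PGL_2(F) itself.  In coordinates, a vertex is the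
   class of the lattice o^2 M spanned by the columns of an invertible matrix M,
   and GL_2(F) acts on vertices by automorphisms lying in hat G.
   (1) Adjacent vertices differ by an integral matrix of determinant valuation 1,
       which is GL_2(o)-equivalent to [[1,0],[c,w]] or [[w,0],[0,1]].
   (2) Hence, by completeness of F, the ray (x_n) is the sequence of classes of
       P diag(1, w^n) for a single invertible matrix P.
   (3) Modulo GL_2(o), every invertible matrix is upper triangular (Iwasawa for
       GL_2(F)); conjugated by P, an upper triangular matrix shifts the ray
       eventually, i.e. fixes omega.
   (4) With z = g^-1(x_0), write z = P T x_0 with T upper triangular; then
       B = P T^-1 P^-1 fixes omega and sends z to x_0, and k = g B^-1 lies in
       hat G (precomposing with an element of PGL_2(F) preserves hat G) and
       fixes x_0. *)

Section BruhatTitsTree.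

Context {F : fieldType} {val : F -> int}.
Hypothesis val_mul : forall {x y : F}, x != 0 -> y != 0 -> val (x * y) = val x + val y.
Hypothesis val_ultra : forall {x y : F}, x != 0 -> y != 0 -> x + y != 0 ->
  (val x <= val (x + y)) || (val y <= val (x + y)).

Local Notation o := (in_o F val).

Lemma val1 : val 1 = 0.
Proof.
have h1 : (1 : F) != 0 by rewrite oner_eq0.
by have := val_mul h1 h1; rewrite mulr1; lia.
Qed.

Lemma valV x : x != 0 -> val x^-1 = - val x.
Proof. by move=> hx; have := val_mul hx (invr_neq0 hx); rewrite mulfV // val1; lia. Qed.

Lemma valN1 : val (-1) = 0.
Proof.
have h : (-1 : F) != 0 by rewrite oppr_eq0 oner_neq0.
by have := val_mul h h; rewrite mulrNN mulr1 val1; lia.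
Qed.

Lemma valN x : x != 0 -> val (- x) = val x.
Proof.
move=> hx; have h : (-1 : F) != 0 by rewrite oppr_eq0 oner_neq0.
by rewrite -mulN1r val_mul // valN1; lia.
Qed.

Lemma in_o0 : o 0. Proof. by rewrite /in_o eqxx. Qed.
Lemma in_o1 : o 1. Proof. by rewrite /in_o val1 lexx orbT. Qed.

Lemma in_oE x : x != 0 -> o x = (0 <= val x).
Proof. by move=> hx; rewrite /in_o (negbTE hx). Qed.

Lemma in_oM {x y} : o x -> o y -> o (x * y).
Proof.
rewrite /in_o; case: (eqVneq x 0) => [->|hx]; first by rewrite mul0r eqxx.
case: (eqVneq y 0) => [->|hy]; first by rewrite mulr0 eqxx.
by rewrite /= val_mul // mulf_eq0 (negbTE hx) (negbTE hy) /=; lia.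
Qed.

Lemma in_oN {x} : o x -> o (- x).
Proof.
rewrite /in_o; case: (eqVneq x 0) => [->|hx]; first by rewrite oppr0 eqxx.
by rewrite /= valN // oppr_eq0 (negbTE hx).
Qed.

Lemma in_oD {x y} : o x -> o y -> o (x + y).
Proof.
case: (eqVneq x 0) => [->|hx]; first by rewrite add0r.
case: (eqVneq y 0) => [->|hy]; first by rewrite addr0.
case: (eqVneq (x + y) 0) => [->|hxy]; first by rewrite in_o0.
rewrite !in_oE // => h1 h2.
by case/orP: (val_ultra hx hy hxy) => h; [exact: le_trans h1 h | exact: le_trans h2 h].
Qed.

Lemma in_oB {x y} : o x -> o y -> o (x - y).
Proof. by move=> h1 h2; apply: in_oD => //; apply: in_oN. Qed.

Lemma in_o_div x y : y != 0 -> (x == 0) || (val y <= val x) -> o (x / y).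
Proof.
move=> hy; case: (eqVneq x 0) => [->|hx] /=; first by rewrite mul0r in_o0.
by move=> h; rewrite in_oE ?mulf_neq0 ?invr_eq0 // val_mul ?invr_eq0 // valV //; lia.
Qed.

Lemma in_oV x : x != 0 -> val x = 0 -> o x^-1.
Proof. by move=> hx h; rewrite -[x^-1]mul1r; apply: in_o_div => //; rewrite h val1 lexx orbT. Qed.

Lemma val_ge1 {x} : o x -> x != 0 -> val x != 0 -> 1 <= val x.
Proof. by move=> h hx; rewrite in_oE // in h; lia. Qed.

(* Explicit 2x2 matrices, for computations with [ring] and [field]. *)

Definition mx2 (a b c d : F) : 'M[F]_2 :=
  \matrix_(i < 2, j < 2) if i == 0 then (if j == 0 then a else b) else (if j == 0 then c else d).

Lemma mx2_eta (M : 'M[F]_2) : M = mx2 (M 0 0) (M 0 1) (M 1 0) (M 1 1).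
Proof.
apply/matrixP => i j; rewrite !mxE; case: i => [[|[|i]] Hi] //; case: j => [[|[|j]] Hj] //=;
  by congr (M _ _); apply/val_inj.
Qed.

Lemma mx2_mul a b c d e f g h :
  mx2 a b c d *m mx2 e f g h = mx2 (a*e+b*g) (a*f+b*h) (c*e+d*g) (c*f+d*h).
Proof.
apply/matrixP => i j; rewrite !mxE !big_ord_recr big_ord0 !mxE /=;
  case: i => [[|[|i]] Hi] //; case: j => [[|[|j]] Hj] //=; rewrite ?add0r //.
Qed.

Lemma det_mx2 a b c d : \det (mx2 a b c d) = a * d - b * c.
Proof.
rewrite (expand_det_row _ 0) !big_ord_recr big_ord0 /cofactor /= !det_mx11 !mxE /=.
by rewrite add0r expr0 expr1 mul1r mulN1r mulrN.
Qed.

Lemma mx2_1 : (1%:M : 'M[F]_2) = mx2 1 0 0 1.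
Proof. apply/matrixP => i j; rewrite !mxE; case: i => [[|[|i]] Hi] //; case: j => [[|[|j]] Hj] //=. Qed.

Lemma mx2_scale k a b c d : k *: mx2 a b c d = mx2 (k * a) (k * b) (k * c) (k * d).
Proof. apply/matrixP => i j; rewrite !mxE; case: i => [[|[|i]] Hi] //; case: j => [[|[|j]] Hj] //=. Qed.

Lemma mx2_unit a b c d : (mx2 a b c d \in unitmx) = (a * d - b * c != 0).
Proof. by rewrite unitmxE det_mx2 unitfE. Qed.

Definition ovec (c : vec F) := forall i, o (c i 0).
Definition omx (X : 'M[F]_2) := forall i j, o (X i j).
Definition GL2o (U : 'M[F]_2) := omx U /\ exists V, omx V /\ U *m V = 1%:M /\ V *m U = 1%:M.

Lemma omx_mx2 a b c d : o a -> o b -> o c -> o d -> omx (mx2 a b c d).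
Proof. move=> ha hb hc hd i j; rewrite !mxE; case: i => [[|[|i]] Hi] //; case: j => [[|[|j]] Hj] //=. Qed.

Lemma omx_mx2E a b c d : omx (mx2 a b c d) -> [/\ o a, o b, o c & o d].
Proof. by move=> h; move: (h 0 0) (h 0 1) (h 1 0) (h 1 1); rewrite !mxE. Qed.

Lemma sum_o n (f : 'I_n -> F) : (forall i, o (f i)) -> o (\sum_i f i).
Proof. move=> h; apply: (big_ind (fun x => o x)) => //; [exact: in_o0 | exact: @in_oD]. Qed.

Lemma omx_mul X Y : omx X -> omx Y -> omx (X *m Y).
Proof. move=> hX hY i j; rewrite mxE; apply: sum_o => k; exact: in_oM. Qed.

Lemma ovec_mul X c : omx X -> ovec c -> ovec (X *m c).
Proof. move=> hX hc i; rewrite mxE; apply: sum_o => k; exact: in_oM. Qed.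

Lemma omx1 : omx 1%:M.
Proof. move=> i j; rewrite mxE; case: (i == j); [exact: in_o1 | exact: in_o0]. Qed.

Lemma omx_det {X} : omx X -> o (\det X).
Proof. by move=> hX; rewrite (mx2_eta X) det_mx2; apply: in_oB; apply: in_oM; apply: hX. Qed.

Lemma GL2o1 : GL2o 1%:M.
Proof. by split; [exact: omx1 | exists 1%:M; rewrite mulmx1; split => //; exact: omx1]. Qed.

Lemma GL2o_mul U V : GL2o U -> GL2o V -> GL2o (U *m V).
Proof.
move=> [hU [U' [hU' [e1 e2]]]] [hV [V' [hV' [e3 e4]]]]; split; first exact: omx_mul.
exists (V' *m U'); split; first exact: omx_mul.
split; first by rewrite mulmxA -(mulmxA U) e3 mulmx1 e1.
by rewrite mulmxA -(mulmxA V') e2 mulmx1 e4.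
Qed.

Lemma GL2o_inv {U} : GL2o U -> exists V, GL2o V /\ U *m V = 1%:M.
Proof. by move=> [hU [V [hV [e1 e2]]]]; exists V; split => //; split => //; exists U. Qed.

Lemma GL2o_unit {U} : GL2o U -> U \in unitmx.
Proof.
move=> [_ [V [_ [e1 _]]]]; rewrite unitmxE unitfE.
have := congr1 determinant e1; rewrite det_mulmx det1 => h.
by apply/eqP => h0; move: h; rewrite h0 mul0r => /eqP; rewrite eq_sym oner_eq0.
Qed.

(* An integral 2x2 matrix whose determinant is a unit of o lies in GL_2(o):
   its inverse is the adjugate divided by the determinant. *)
Lemma GL2o_mx2 a b c d : o a -> o b -> o c -> o d -> a * d - b * c != 0 ->
  val (a * d - b * c) = 0 -> GL2o (mx2 a b c d).
Proof.
move=> ha hb hc hd hD hv; split; first exact: omx_mx2.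
set D := a * d - b * c; have hD' : o D^-1 by apply: in_oV.
exists (mx2 (d * D^-1) (- b * D^-1) (- c * D^-1) (a * D^-1)); split.
  by apply: omx_mx2; apply: in_oM => //; apply: in_oN.
by rewrite !mx2_mul mx2_1; split; congr mx2; rewrite /D; field.
Qed.

Lemma GL2o_det {U} : omx U -> \det U != 0 -> val (\det U) = 0 -> GL2o U.
Proof.
move=> hU; have := hU; rewrite (mx2_eta U) det_mx2; case/omx_mx2E => *.
exact: GL2o_mx2.
Qed.

Definition eqL (L L' : vec F -> Prop) := forall v, L v <-> L' v.
Definition LatM (M : 'M[F]_2) : vec F -> Prop := fun v => exists c, ovec c /\ v = M *m c.

Lemma eqL_refl L : eqL L L. Proof. by []. Qed.
Lemma eqL_sym {L L'} : eqL L L' -> eqL L' L. Proof. by move=> h v; split => /h. Qed.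
Lemma eqL_trans {L1 L2 L3} : eqL L1 L2 -> eqL L2 L3 -> eqL L1 L3.
Proof. by move=> h1 h2 v; split => [/h1/h2|/h2/h1]. Qed.

Lemma LatM_sub M X : omx X -> forall v, LatM (M *m X) v -> LatM M v.
Proof. move=> hX v [c [hc ->]]; exists (X *m c); split; [exact: ovec_mul | by rewrite mulmxA]. Qed.

Lemma LatM_GL M U : GL2o U -> eqL (LatM (M *m U)) (LatM M).
Proof.
move=> [hU [V [hV [e1 e2]]]] v; split; first exact: LatM_sub.
by move=> h; apply: (@LatM_sub _ V hV); rewrite -mulmxA e1 mulmx1.
Qed.

Lemma LatM_scale a M : eqL (LatM (a *: M)) (scale_set F a (LatM M)).
Proof.
move=> v; split.
  by move=> [c [hc ->]]; exists (M *m c); split; [exists c | rewrite scalemxAl].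
by move=> [u [[c [hc ->]] ->]]; exists c; split => //; rewrite scalemxAl.
Qed.

Lemma ovec_delta (j : 'I_2) : ovec (delta_mx j 0).
Proof. move=> i; rewrite mxE; case: (_ && _); [exact: in_o1 | exact: in_o0]. Qed.

Lemma LatM_sub_inv {M N} : M \in unitmx -> (forall v, LatM N v -> LatM M v) ->
  omx (invmx M *m N).
Proof.
move=> hM h i j.
have [|c [hc e]] := h (N *m delta_mx j 0); first by exists (delta_mx j 0); split => //; exact: ovec_delta.
have -> : (invmx M *m N) i j = col j (invmx M *m N) i 0 by rewrite colEsub /mxsub mxE.
by rewrite colE -mulmxA e mulKmx.
Qed.

Lemma scale_eqL a {L L'} : eqL L L' -> eqL (scale_set F a L) (scale_set F a L').
Proof. by move=> h v; split => -[u [/h hu ->]]; exists u. Qed.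

Lemma scale_scale a b L : eqL (scale_set F a (scale_set F b L)) (scale_set F (a * b) L).
Proof.
move=> v; split; first by move=> [u [[u' [hu' ->]] ->]]; exists u'; rewrite scalerA.
by move=> [u [hu ->]]; exists (b *: u); split; [exists u | rewrite scalerA].
Qed.

Lemma scale1 L : eqL (scale_set F 1 L) L.
Proof. by move=> v; split => [[u [hu ->]]|hv]; [rewrite scale1r | exists v; rewrite scale1r]. Qed.

Lemma mat_img_eqL A {L L'} : eqL L L' -> eqL (mat_img F A L) (mat_img F A L').
Proof. by move=> h v; split => -[u [/h hu ->]]; exists u. Qed.

Lemma mat_img_scale A a L :
  eqL (mat_img F A (scale_set F a L)) (scale_set F a (mat_img F A L)).
Proof.
move=> v; split.
  by move=> [u [[u' [hu' ->]] ->]]; exists (A *m u'); split; [exists u' | rewrite scalemxAr].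
by move=> [u [[u' [hu' ->]] ->]]; exists (a *: u'); split; [exists u' | rewrite scalemxAr].
Qed.

Lemma mat_img_mul A B L : eqL (mat_img F A (mat_img F B L)) (mat_img F (A *m B) L).
Proof.
move=> v; split; first by move=> [u [[u' [hu' ->]] ->]]; exists u'; rewrite mulmxA.
by move=> [u [hu ->]]; exists (B *m u); split; [exists u | rewrite mulmxA].
Qed.

Lemma mat_img_1 L : eqL (mat_img F 1%:M L) L.
Proof. by move=> v; split => [[u [hu ->]]|hv]; [rewrite mul1mx | exists v; rewrite mul1mx]. Qed.

Lemma mat_img_LatM A M : eqL (mat_img F A (LatM M)) (LatM (A *m M)).
Proof.
move=> v; split; first by move=> [u [[c [hc ->]] ->]]; exists c; split => //; rewrite mulmxA.
by move=> [c [hc ->]]; exists (M *m c); split; [exists c | rewrite mulmxA].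
Qed.

Local Notation V := (vertex F val).
Definition cls (x : V) := proj1_sig x.
Definition inV (x : V) M := cls x (LatM M).

Lemma vclass {x L} : cls x L ->
  forall L', cls x L' <-> exists a, a != 0 /\ eqL L' (scale_set F a L).
Proof.
case: x => C [L0 [hl hC]] /=; rewrite /cls /= => /hC [a0 [ha0 e0]] L'; split.
  move=> /hC [b [hb eb]]; exists (b / a0); split; first by rewrite mulf_neq0 ?invr_eq0.
  apply: (eqL_trans eb); apply: eqL_sym.
  apply: eqL_trans (scale_eqL _ e0) _; apply: eqL_trans (scale_scale _ _ _) _.
  by rewrite mulfVK.
move=> [c [hc ec]]; apply/hC; exists (c * a0); split; first by rewrite mulf_neq0.
by apply: (eqL_trans ec); apply: eqL_trans (scale_eqL _ e0) _; exact: scale_scale.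
Qed.

Lemma v_eq {x y L} : cls x L -> cls y L -> x = y.
Proof.
move=> hx hy.
have E : cls x = cls y.
  apply: functional_extensionality => L'; apply: propositional_extensionality.
  by rewrite (vclass hx) (vclass hy).
move: E; case: x {hx} => C pC; case: y {hy} => C' pC' /= E; subst C'.
by rewrite (proof_irrelevance _ pC pC').
Qed.

Lemma v_closed {x L} L' : cls x L -> eqL L' L -> cls x L'.
Proof.
move=> hx e; apply/(vclass hx); exists 1; split; first exact: oner_neq0.
exact: eqL_trans e (eqL_sym (scale1 _)).
Qed.

Lemma v_rep (x : V) : exists M, M \in unitmx /\ inV x M.
Proof.
case: x => C [L0 [[M [hM hL]] hC]]; exists M; split => //; rewrite /inV /cls /=.
apply/hC; exists 1; split; first exact: oner_neq0.
move=> v; split; first by move=> h; exists v; split; [apply/hL | rewrite scale1r].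
by move=> [u [/hL hu ->]]; rewrite scale1r.
Qed.

Lemma inV_hom {x M} a U : inV x M -> a != 0 -> GL2o U -> inV x (a *: (M *m U)).
Proof.
move=> hx ha hU; apply/(vclass hx); exists a; split => //.
by apply: eqL_trans (LatM_scale _ _) _; apply: scale_eqL; exact: LatM_GL.
Qed.

Lemma inV_GL {x M} U : inV x M -> GL2o U -> inV x (M *m U).
Proof. by move=> h hU; have := inV_hom 1 U h (oner_neq0 _) hU; rewrite scale1r. Qed.

Lemma inV_unscale {x M} a : a != 0 -> inV x (a *: M) -> inV x M.
Proof.
move=> ha h; have := inV_hom a^-1 1%:M h (invr_neq0 ha) GL2o1.
by rewrite mulmx1 scalerA mulVf // scale1r.
Qed.

Lemma cls_LatM {x M L} : inV x M -> cls x L -> exists a, a != 0 /\ eqL L (LatM (a *: M)).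
Proof.
move=> hx /(vclass hx) [a [ha e]]; exists a; split => //.
exact: eqL_trans e (eqL_sym (LatM_scale _ _)).
Qed.

(* The action of GL_2(F) on the vertices: A sends the class of L to the class
   of A L.  Off the invertible matrices we let it act trivially, to make it a
   total function. *)

Definition act_pred A (x : V) : (vec F -> Prop) -> Prop :=
  if A \in unitmx then fun L => exists L1, cls x L1 /\ eqL L (mat_img F A L1) else cls x.

Lemma act_is_vertex A x : is_vertex F val (act_pred A x).
Proof.
rewrite /act_pred; case: ifP => hA; last exact: (proj2_sig x).
case: x => C [L0 [[M [hM hL]] hC]] /=.
exists (mat_img F A L0); split.
  exists (A *m M); split; first by rewrite unitmx_mul hA hM.
  move=> v; split.
    by move=> [u [/hL [c [hc ->]] ->]]; exists c; split => //; rewrite mulmxA.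
  by move=> [c [hc ->]]; exists (M *m c); split; [apply/hL; exists c | rewrite mulmxA].
move=> L; split.
  move=> [L1 [/hC [a [ha e]] e1]]; exists a; split => //.
  by apply: eqL_trans e1 _; apply: eqL_trans (mat_img_eqL _ e) _; exact: mat_img_scale.
move=> [a [ha e]]; exists (scale_set F a L0); split; first by apply/hC; exists a; split.
exact: eqL_trans e (eqL_sym (mat_img_scale _ _ _)).
Qed.

Definition act A (x : V) : V := exist _ (act_pred A x) (act_is_vertex A x).

Lemma act_in {A x L} : A \in unitmx -> cls x L -> cls (act A x) (mat_img F A L).
Proof. by move=> hA hx; rewrite /act /cls /= /act_pred hA; exists L. Qed.

Lemma act_inV {A x M} : A \in unitmx -> inV x M -> inV (act A x) (A *m M).
Proof. by move=> hA hx; apply: v_closed (act_in hA hx) _; exact: eqL_sym (mat_img_LatM _ _). Qed.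

Lemma act_mul A B x : A \in unitmx -> B \in unitmx -> act A (act B x) = act (A *m B) x.
Proof.
move=> hA hB; have [M [hM hx]] := v_rep x.
have hAB : A *m B \in unitmx by rewrite unitmx_mul hA hB.
exact: v_eq (act_in hA (act_in hB hx)) (v_closed _ (act_in hAB hx) (mat_img_mul _ _ _)).
Qed.

Lemma act_1 x : act 1%:M x = x.
Proof.
have [M [hM hx]] := v_rep x.
exact: v_eq (act_in (unitmx1 _ _) hx) (v_closed _ hx (mat_img_1 _)).
Qed.

Lemma act_invK A x : A \in unitmx -> act (invmx A) (act A x) = x.
Proof. by move=> hA; rewrite act_mul ?unitmx_inv // mulVmx // act_1. Qed.

Lemma act_Kinv A x : A \in unitmx -> act A (act (invmx A) x) = x.
Proof. by move=> hA; rewrite act_mul ?unitmx_inv // mulmxV // act_1. Qed.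

Lemma pgl_act_act A x : A \in unitmx -> pgl_act F val A x (act A x).
Proof. by move=> hA; have [M [hM hx]] := v_rep x; exists (LatM M); split => //; exact: act_in. Qed.

Lemma pgl_act_eq {A x z} : A \in unitmx -> pgl_act F val A x z -> z = act A x.
Proof. by move=> hA [L [hx hz]]; exact: v_eq hz (act_in hA hx). Qed.

Context {w : F}.

Lemma ssubset_eqL {L1 L1' L2 L2'} : eqL L1 L1' -> eqL L2 L2' ->
  ssubset F L1 L2 -> ssubset F L1' L2'.
Proof.
move=> e1 e2 [h1 [v [h2 h3]]]; split; first by move=> u /e1 /h1 /e2.
by exists v; split => [|/e1]; [exact/e2 | ].
Qed.

Lemma ssubset_img {A L1 L2} : A \in unitmx -> ssubset F L1 L2 ->
  ssubset F (mat_img F A L1) (mat_img F A L2).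
Proof.
move=> hA [h1 [v [h2 h3]]]; split; first by move=> u [u' [/h1 hu ->]]; exists u'.
exists (A *m v); split; first by exists v.
by move=> [u [hu /(congr1 (mulmx (invmx A)))]]; rewrite !mulKmx // => e; apply: h3; rewrite e.
Qed.

Lemma act_adj {A x y} : A \in unitmx -> adjacent F val w x y ->
  adjacent F val w (act A x) (act A y).
Proof.
move=> hA [L [L' [hx [hy [s1 s2]]]]].
exists (mat_img F A L), (mat_img F A L'); do 2 (split; first exact: act_in).
split; last exact: ssubset_img.
exact: ssubset_eqL (mat_img_scale _ _ _) (eqL_refl _) (ssubset_img hA s1).
Qed.

Lemma act_walk {A x y n} : A \in unitmx -> walk F val w x y n ->
  walk F val w (act A x) (act A y) n.
Proof.
move=> hA [s [s0 [sn hs]]]; exists (fun i => act A (s i)).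
by rewrite s0 sn; do 2 (split => //); move=> i hi; apply: act_adj => //; apply: hs.
Qed.

Lemma act_dist {A x y n} : A \in unitmx ->
  dist F val w x y n <-> dist F val w (act A x) (act A y) n.
Proof.
move=> hA; have hA' : invmx A \in unitmx by rewrite unitmx_inv.
split => -[hw hm]; split.
- exact: act_walk.
- by move=> m /(act_walk hA'); rewrite !act_invK //; apply: hm.
- by move: (act_walk hA' hw); rewrite !act_invK.
- by move=> m /(act_walk hA); apply: hm.
Qed.

Lemma act_ball {A y1 y2 e y} : A \in unitmx -> in_ball F val w y1 y2 e y ->
  in_ball F val w (act A y1) (act A y2) e (act A y).
Proof.
move=> hA [n [hn hd]]; exists n; split => //.
by case: hd => h; [left | right]; exact: (proj1 (act_dist hA) h).
Qed.

Lemma act_Ghat e A : A \in unitmx -> in_Ghat F val w e (act A).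
Proof.
move=> hA; split.
  by split => [|x y n]; [exists (act (invmx A)) => x; [exact: act_invK | exact: act_Kinv] | exact: act_dist].
by move=> y1 y2 _; exists A; split => // y _; exact: pgl_act_act.
Qed.

(* hat G is stable under precomposition by elements of PGL_2(F): on each ball
   B(eta, e), g o A agrees with the product of A and the element of PGL_2(F)
   that g agrees with on the image ball B(A eta, e). *)
Lemma Ghat_comp_act {e g A} : in_Ghat F val w e g -> A \in unitmx ->
  in_Ghat F val w e (fun y => g (act A y)).
Proof.
move=> [[[ginv hgK hKg] hgd] hgl] hA.
split; first split.
- exists (fun y => act (invmx A) (ginv y)) => y /=; first by rewrite hgK act_invK.
  by rewrite act_Kinv // hKg.
- by move=> y1 y2 n; exact: (iff_trans (act_dist hA) (hgd _ _ n)).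
- move=> y1 y2 hadj; have [C [hC hCb]] := hgl _ _ (act_adj hA hadj).
  have hCA : C *m A \in unitmx by rewrite unitmx_mul hC hA.
  exists (C *m A); split => // y hy.
  by rewrite (pgl_act_eq hC (hCb _ (act_ball hA hy))) act_mul //; exact: pgl_act_act.
Qed.

Hypotheses (w_neq0 : w != 0) (val_w : val w = 1).

Lemma proper_sublattice {M N} : M \in unitmx -> N \in unitmx ->
  ssubset F (LatM N) (LatM M) ->
  [/\ omx (invmx M *m N), \det (invmx M *m N) != 0 & 1 <= val (\det (invmx M *m N))].
Proof.
move=> hM hN [sub [v [vM vN]]].
have hY := LatM_sub_inv hM sub.
have dY : \det (invmx M *m N) != 0 by rewrite -unitfE -unitmxE unitmx_mul unitmx_inv hM hN.
split => //; apply: (val_ge1 (omx_det hY) dY); apply/eqP => vY; apply: vN.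
have -> : N = M *m (invmx M *m N) by rewrite mulmxA mulmxV // mul1mx.
exact: (proj2 (LatM_GL M _ (GL2o_det hY dY vY) v) vM).
Qed.

(* Adjacency in coordinates: if x is the class of o^2 M and y is adjacent to x,
   then y is the class of o^2 (M Y) for an integral Y with v(det Y) = 1.
   Indeed w L < L' < L gives Y Z = w for integral Y, Z of non-unit determinant. *)
Lemma adj_class {x y M} : M \in unitmx -> inV x M -> adjacent F val w x y ->
  exists Y, [/\ omx Y, \det Y != 0, val (\det Y) = 1 & inV y (M *m Y)].
Proof.
move=> hM hxM [L [L' [hx [hy [s1 s2]]]]].
have [a [ha eL]] := cls_LatM hxM hx.
have [N [hN hyN]] := v_rep y.
have [b [hb eL']] := cls_LatM hyN hy.
have unitZ c (K : 'M[F]_2) : c != 0 -> K \in unitmx -> c *: K \in unitmx.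
  by move=> hc hK; rewrite unitmxZ ?unitfE.
have hM' := unitZ _ _ ha hM; have hN' := unitZ _ _ hb hN; have hwM' := unitZ _ _ w_neq0 hM'.
have ewL := eqL_trans (scale_eqL w eL) (eqL_sym (LatM_scale w (a *: M))).
have [hY dY vY] := proper_sublattice hM' hN' (ssubset_eqL eL' eL s2).
have [_ dZ vZ] := proper_sublattice hN' hwM' (ssubset_eqL ewL eL' s1).
set Y := invmx (a *: M) *m (b *: N) in hY dY vY.
set Z := invmx (b *: N) *m (w *: (a *: M)) in dZ vZ.
have dYZ : \det Y * \det Z = w ^+ 2.
  rewrite -det_mulmx /Y /Z mulmxA -(mulmxA _ (b *: N)) mulmxV // mulmx1.
  by rewrite -scalemxAr mulVmx // detZ det1 mulr1.
have vYZ : val (\det Y) + val (\det Z) = 2 by rewrite -val_mul // dYZ expr2 val_mul // val_w.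
exists Y; split => //; first by move: vY vZ vYZ; move: (val (\det Y)) (val (\det Z)) => p q; lia.
apply: (inV_unscale a ha); rewrite scalemxAl /Y mulmxA mulmxV // mul1mx.
exact: v_closed hy (eqL_sym eL').
Qed.

Definition Smx := mx2 0 1 1 0.

Lemma GL2o_S : GL2o Smx.
Proof.
apply: GL2o_mx2; rewrite ?mulr0 ?mulr1 ?sub0r ?valN1 ?oppr_eq0 ?oner_neq0 //;
  [exact: in_o0 | exact: in_o1 | exact: in_o1 | exact: in_o0].
Qed.

Lemma normal_form_corner {a b c d} : o a -> o b -> o c -> o d -> a != 0 -> val a = 0 ->
  a * d - b * c != 0 -> val (a * d - b * c) = 1 ->
  exists W c', [/\ GL2o W, o c' & mx2 a b c d *m W = mx2 1 0 c' w].
Proof.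
move=> ha hb hc hd a0 va hD hv; set D := a * d - b * c in hD hv.
have hq0 : w / D != 0 by rewrite mulf_neq0 ?invr_eq0.
have hq : o (w / D) by rewrite in_oE // val_mul ?invr_eq0 // valV // val_w hv.
exists (mx2 a^-1 (- b * (w / D)) 0 (a * (w / D))), (c / a); split.
- have e : a^-1 * (a * (w / D)) - - b * (w / D) * 0 = w / D by field; rewrite ?a0 ?hD.
  apply: GL2o_mx2; rewrite ?e // ?val_mul ?invr_eq0 // ?valV // ?val_w ?hv //; first exact: in_oV.
  + by apply: in_oM => //; apply: in_oN.
  + exact: in_o0.
  + exact: in_oM.
- by apply: in_oM => //; apply: in_oV.
- by rewrite mx2_mul; congr mx2; rewrite /D; field; rewrite ?a0.
Qed.

Lemma normal_form {Y} : omx Y -> \det Y != 0 -> val (\det Y) = 1 ->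
  exists W, GL2o W /\
    ((exists c, o c /\ Y *m W = mx2 1 0 c w) \/ Y *m W = mx2 w 0 0 1).
Proof.
rewrite [Y]mx2_eta det_mx2; move: (Y 0 0) (Y 0 1) (Y 1 0) (Y 1 1) => a b c d.
case/omx_mx2E=> ha hb hc hd hD hv; set D := a * d - b * c in hD hv.
have [/andP [a0 /eqP va]|hA] := boolP ((a != 0) && (val a == 0)).
  have [W [c' [hW hc' e]]] := normal_form_corner ha hb hc hd a0 va hD hv.
  by exists W; split => //; left; exists c'.
have [/andP [b0 /eqP vb]|hB] := boolP ((b != 0) && (val b == 0)).
  have eS : mx2 a b c d *m Smx = mx2 b a d c by rewrite mx2_mul; congr mx2; ring.
  have eD : b * c - a * d = - D by rewrite /D; ring.
  have hD' : b * c - a * d != 0 by rewrite eD oppr_eq0.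
  have hv' : val (b * c - a * d) = 1 by rewrite eD valN.
  have [W [c' [hW hc' e]]] := normal_form_corner hb ha hd hc b0 vb hD' hv'.
  exists (Smx *m W); split; first exact: GL2o_mul GL2o_S hW.
  by left; exists c'; rewrite mulmxA eS.
(* both a and b lie in the maximal ideal, so they are divisible by det Y *)
have odiv z : o z -> ~~ ((z != 0) && (val z == 0)) -> o (z / D).
  move=> hz hz'; apply: in_o_div => //; rewrite hv.
  by case: (eqVneq z 0) => //= z0; apply: val_ge1; move: hz'; rewrite z0.
have hq0 : w / D != 0 by rewrite mulf_neq0 ?invr_eq0.
have hq : o (w / D) by rewrite in_oE // val_mul ?invr_eq0 // valV // val_w hv.
exists (mx2 (d * (w / D)) (- b / D) (- c * (w / D)) (a / D)); split; last first.
  by right; rewrite mx2_mul; congr mx2; rewrite /D; field; rewrite ?hD.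
have e : d * (w / D) * (a / D) - - b / D * (- c * (w / D)) = w / D by rewrite /D; field; rewrite ?hD.
apply: GL2o_mx2; rewrite ?e // ?val_mul ?invr_eq0 // ?valV // ?val_w ?hv //.
- exact: in_oM.
- by rewrite mulNr; apply: in_oN; apply: odiv.
- by apply: in_oM => //; apply: in_oN.
- exact: odiv.
Qed.

(* The matrices diag(1, w^n) and the lower unipotent matrices [[1,0],[t,1]],
   which parametrise a ray issuing from a vertex. *)

Definition D (n : nat) := mx2 1 0 0 (w ^+ n).
Definition Lmx (t : F) := mx2 1 0 t 1.

Lemma D0 : D 0 = 1%:M. Proof. by rewrite /D mx2_1. Qed.
Lemma Lmx0 : Lmx 0 = 1%:M. Proof. by rewrite /Lmx mx2_1. Qed.

Lemma D_unit n : D n \in unitmx.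
Proof. by rewrite /D mx2_unit mulr0 subr0 mul1r expf_neq0. Qed.

Lemma L_unit t : Lmx t \in unitmx.
Proof. by rewrite /Lmx mx2_unit mulr1 mul0r subr0 oner_neq0. Qed.

Lemma LD t m : D m *m Lmx t = Lmx (w ^+ m * t) *m D m.
Proof. by rewrite /D /Lmx !mx2_mul; congr mx2; ring. Qed.

Lemma LL s t : Lmx s *m Lmx t = Lmx (s + t).
Proof. by rewrite /Lmx !mx2_mul; congr mx2; ring. Qed.

(* The two normal forms of [normal_form], seen from D n: a step forward along
   a ray, or a step back to the class of D n.-1. *)
Lemma D_step_forward n c : D n *m mx2 1 0 c w = Lmx (w ^+ n * c) *m D n.+1.
Proof. by rewrite /D /Lmx !mx2_mul exprS; congr mx2; ring. Qed.

Lemma D_step_back n : D n.+1 *m mx2 w 0 0 1 = w *: D n.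
Proof. by rewrite /D !mx2_mul mx2_scale exprS; congr mx2; ring. Qed.

Lemma in_o_exp k : o (w ^+ k).
Proof.
have ow : o w by rewrite in_oE // val_w.
by elim: k => [|k IH]; [exact: in_o1 | rewrite exprS; exact: in_oM].
Qed.

Lemma GL2o_L {t} : o t -> GL2o (Lmx t).
Proof.
move=> ht; apply: GL2o_mx2; rewrite ?mulr1 ?mul0r ?subr0 ?val1 ?oner_neq0 //;
  [exact: in_o1 | exact: in_o0 | exact: in_o1].
Qed.

Definition wdiv (i : nat) (t : F) := o (t / w ^+ i).

Lemma val_wexp i : val (w ^+ i) = i.
Proof. elim: i => [|i IH]; first by rewrite expr0 val1. rewrite exprS val_mul ?expf_neq0 // IH val_w. lia. Qed.

Lemma wdiv0 i : wdiv i 0. Proof. by rewrite /wdiv mul0r; exact: in_o0. Qed.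

Lemma wdivD i t u : wdiv i t -> wdiv i u -> wdiv i (t + u).
Proof. by rewrite /wdiv mulrDl; apply: in_oD. Qed.

Lemma wdivN i t : wdiv i t -> wdiv i (- t).
Proof. by rewrite /wdiv mulNr; apply: in_oN. Qed.

Lemma wdiv_mono i j t : (i <= j)%N -> wdiv j t -> wdiv i t.
Proof.
move=> hij h; rewrite /wdiv.
have -> : t / w ^+ i = (t / w ^+ j) * w ^+ (j - i).
  by rewrite -mulrA -{1}(subnKC hij) exprD invfM -mulrA mulVf ?expf_neq0 // mulr1.
exact: in_oM h (in_o_exp _).
Qed.

Lemma wdiv_mul k c : o c -> wdiv k (w ^+ k * c).
Proof. by move=> hc; rewrite /wdiv mulrC mulrA mulVf ?expf_neq0 // mul1r. Qed.

Lemma wdivE i t : wdiv i t = (t == 0) || (i%:Z <= val t).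
Proof.
rewrite /wdiv; case: (eqVneq t 0) => [->|t0] /=; first by rewrite mul0r in_o0.
rewrite in_oE ?mulf_neq0 ?invr_eq0 ?expf_neq0 // val_mul ?invr_eq0 ?expf_neq0 //.
by rewrite valV ?expf_neq0 // val_wexp subr_ge0.
Qed.

Lemma close_of_wdiv (n : int) (i : nat) t u : n <= i%:Z -> wdiv i (u - t) -> close F val n t u.
Proof.
move=> hn; rewrite wdivE /close; case: (eqVneq (u - t) 0) => [e|ne] /=.
  by rewrite (subr0_eq e) eqxx.
by move=> h; apply/orP; right; rewrite -opprB valN //; exact: le_trans hn h.
Qed.

Lemma wdiv_of_close (i : nat) t u : close F val i t u -> wdiv i (u - t).
Proof.
rewrite /close wdivE; case/orP => [/eqP ->|h]; first by rewrite subrr eqxx.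
case: (eqVneq (u - t) 0) => //= ne.
by rewrite -opprB valN // -opprB oppr_eq0.
Qed.

Hypothesis complete : forall a : nat -> F,
  (forall n : int, exists N : nat, forall i j, (N <= i)%N -> (N <= j)%N ->
      close F val n (a i) (a j)) ->
  exists l : F, forall n : int, exists N : nat, forall i, (N <= i)%N -> close F val n (a i) l.

Lemma w_adic_limit {a : nat -> F} : (forall i j, (i <= j)%N -> wdiv i (a j - a i)) ->
  exists l, forall m, wdiv m (l - a m).
Proof.
move=> cau; have [|l hl] := complete a.
  move=> n; exists (absz n) => i j hi hj.
  have hN k : (absz n <= k)%N -> n <= k%:Z.
    by move=> hk; apply: le_trans (lez_abs n) _; rewrite lez_nat.
  have [hij|hji] := leqP i j; first exact: close_of_wdiv (hN _ hi) (cau _ _ hij).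
  by apply: close_of_wdiv (hN _ hj) _; rewrite -opprB; apply: wdivN; exact: cau (ltnW hji).
exists l => m; have [N hN] := hl m.
have -> : l - a m = (l - a (maxn N m)) + (a (maxn N m) - a m) by ring.
by apply: wdivD; [exact: wdiv_of_close (hN _ (leq_maxl _ _)) | exact: cau (leq_maxr _ _)].
Qed.

(* Iwasawa decomposition of GL_2(F): modulo GL_2(o) on the right, every
   invertible matrix is upper triangular (clear the lower row by a column
   operation pivoting on its entry of smaller valuation). *)
Lemma iwasawa {K} : K \in unitmx -> exists W a b d,
  [/\ GL2o W, a != 0, d != 0 & K *m W = mx2 a b 0 d].
Proof.
move=> hK; suff [W [a [b [d [hW e]]]]] : exists W a b d, GL2o W /\ K *m W = mx2 a b 0 d.
  have : K *m W \in unitmx by rewrite unitmx_mul hK (GL2o_unit hW).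
  rewrite e mx2_unit mulr0 subr0 mulf_eq0 negb_or => /andP [a0 d0].
  by exists W, a, b, d.
move: hK; rewrite [K]mx2_eta; move: (K 0 0) (K 0 1) (K 1 0) (K 1 1) => a b c d hK.
have [/andP [d0 hcd]|hcd] := boolP ((d != 0) && ((c == 0) || (val d <= val c))).
  exists (mx2 1 0 (- (c / d)) 1), (a - b * (c / d)), b, d; split.
    apply: GL2o_mx2; rewrite ?mulr1 ?mul0r ?subr0 ?val1 ?oner_neq0 //;
      [exact: in_o1 | exact: in_o0 | by apply: in_oN; apply: in_o_div | exact: in_o1].
  by rewrite mx2_mul; congr mx2; field.
have c0 : c != 0.
  apply: contraNneq hcd => c0; rewrite c0 eqxx andbT.
  by apply: contraTneq hK => d0; rewrite mx2_unit c0 d0 !mulr0 subr0 eqxx.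
have hdc : o (d / c).
  apply: in_o_div => //; move: hcd; rewrite (negbTE c0) /=.
  by case: (eqVneq d 0) => //= _; rewrite -ltNge => /ltW.
exists (mx2 (- (d / c)) 1 1 0), (b - a * (d / c)), a, c; split.
  apply: GL2o_mx2; rewrite ?mulr1 ?mulr0 ?sub0r ?valN1 ?oppr_eq0 ?oner_neq0 //;
    [exact: in_oN | exact: in_o1 | exact: in_o1 | exact: in_o0].
by rewrite mx2_mul; congr mx2; field.
Qed.

Lemma upper_shifts_ray {p} q {r} : p != 0 -> r != 0 -> exists a b : nat, forall n : nat,
  exists V, GL2o V /\ mx2 p q 0 r *m D (n + a) = p *: (D (n + b) *m V).
Proof.
move=> hp hr; set k := val (r / p).
set a := (absz k + absz (val p - val q))%N.
have hak : 0 <= a%:Z + k by have := lez_abs k; have := abszE k; rewrite /a PoszD; lia.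
exists a, (absz (a%:Z + k)) => n; set b := absz (a%:Z + k).
have hb : b%:Z = a%:Z + k by rewrite /b gez0_abs.
have hwa : w ^+ a != 0 by rewrite expf_neq0.
have hwb : w ^+ b != 0 by rewrite expf_neq0.
set t := q * w ^+ (n + a) / p; set u := r / p * w ^+ a / w ^+ b.
have hu0 : u != 0 by rewrite !mulf_neq0 ?invr_eq0.
have hvu : val u = 0.
  by rewrite /u val_mul ?mulf_neq0 ?invr_eq0 // val_mul ?mulf_neq0 ?invr_eq0 // valV // !val_wexp -/k hb; lia.
have ht : o t.
  rewrite /t; case: (eqVneq q 0) => [->|q0]; first by rewrite !mul0r in_o0.
  have hwna : w ^+ (n + a) != 0 by rewrite expf_neq0.
  rewrite in_oE ?mulf_neq0 ?invr_eq0 // val_mul ?mulf_neq0 ?invr_eq0 // val_mul // valV //.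
  by rewrite val_wexp PoszD; have := lez_abs (val p - val q); have := abszE (val p - val q); rewrite /a PoszD; lia.
exists (mx2 1 t 0 u); split.
  apply: GL2o_mx2; rewrite ?mulr1 ?mul0r ?mulr0 ?subr0 ?mul1r //;
    [exact: in_o1 | exact: in_o0 | by rewrite in_oE // hvu].
by rewrite /D !mx2_mul mx2_scale /t /u !exprD; congr mx2; field; rewrite ?hp ?hwa ?hwb.
Qed.

Section Apartment.

Context {x : int -> V}.
Hypothesis hx : biinf_path F val w x.

Lemma adjx (n : nat) : adjacent F val w (x n) (x n.+1).
Proof. by have := (hx n).1; rewrite -addn1 PoszD. Qed.

Lemma nonbacktracking (n : nat) : x n <> x n.+2.
Proof.
have := (hx n.+1).2.
have -> : (n.+1%:Z - 1) = n by rewrite -addn1 PoszD addrK.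
by rewrite -[(n.+1 : int) + 1]PoszD addn1.
Qed.

Definition ray_prefix (R : 'M[F]_2) (s : F) (n : nat) :=
  forall m, (m <= n)%N -> inV (x m) (R *m (Lmx s *m D m)).

Lemma ray_start : exists R, R \in unitmx /\ ray_prefix R 0 1.
Proof.
have [M [hM hx0]] := v_rep (x 0%N).
have [Y [hY dY vY hyY]] := adj_class hM hx0 (adjx 0).
have [W [hW [[c [hc e]]|e]]] := normal_form hY dY vY;
  have := inV_GL W hyY hW; rewrite -mulmxA e => h1.
- exists (M *m Lmx c); split; first by rewrite unitmx_mul hM L_unit.
  case=> [|[|m]] // _; rewrite Lmx0 mul1mx; first by rewrite D0 mulmx1; exact: inV_GL _ hx0 (GL2o_L hc).
  by rewrite -mulmxA; move: h1; rewrite -[mx2 1 0 c w]mul1mx -D0 D_step_forward expr0 mul1r.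
- exists (M *m Smx); split; first by rewrite unitmx_mul hM (GL2o_unit GL2o_S).
  case=> [|[|m]] // _; rewrite Lmx0 mul1mx; first by rewrite D0 mulmx1; exact: inV_GL _ hx0 GL2o_S.
  have := inV_GL Smx h1 GL2o_S.
  suff -> : M *m mx2 w 0 0 1 *m Smx = M *m Smx *m D 1 by [].
  by rewrite -!mulmxA /Smx /D !mx2_mul; congr (_ *m mx2 _ _ _ _); ring.
Qed.

(* The next vertex x_{n+2} is reached by one more step forward: a step back
   would return to x_n, which the path forbids. *)
Lemma ray_extend {R s n} : R \in unitmx -> ray_prefix R s n.+1 ->
  exists c, o c /\ ray_prefix R (s + w ^+ n.+1 * c) n.+2.
Proof.
move=> hR H; have hM : R *m (Lmx s *m D n.+1) \in unitmx by rewrite !unitmx_mul hR L_unit D_unit.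
have [Y [hY dY vY hyY]] := adj_class hM (H n.+1 (leqnn _)) (adjx n.+1).
have [W [hW [[c [hc e]]|e]]] := normal_form hY dY vY;
  have := inV_GL W hyY hW; rewrite -!mulmxA e.
- rewrite D_step_forward (mulmxA (Lmx s)) LL => hnew.
  exists c; split => // m; rewrite leq_eqVlt => /orP [/eqP -> //|hm].
  have := inV_GL (Lmx (w ^+ (n.+1 - m) * c)) (H m hm) (GL2o_L (in_oM (in_o_exp _) hc)).
  by rewrite -!mulmxA LD (mulmxA (Lmx s)) LL mulrA -exprD subnKC.
- rewrite D_step_back -!scalemxAr => /(inV_unscale w w_neq0) h.
  by case: (nonbacktracking n); exact: v_eq (H n (leqW (leqnn _))) h.
Qed.

Section Approximation.

Context {R : 'M[F]_2}.
Hypotheses (hR : R \in unitmx) (hR1 : ray_prefix R 0 1).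

Fixpoint approx (n : nat) : {s | ray_prefix R s n.+1} :=
  if n is k.+1 then
    let: exist s hs := approx k in
    let: exist c hc := constructive_indefinite_description _ (ray_extend hR hs) in
    exist _ (s + w ^+ k.+1 * c) (proj2 hc)
  else exist _ 0 hR1.

Lemma approx_step k : wdiv k.+1 (sval (approx k.+1) - sval (approx k)).
Proof.
rewrite /=; case: (approx k) => s hs /=.
by case: constructive_indefinite_description => c [hc _] /=; rewrite addrAC subrr add0r wdiv_mul.
Qed.

Lemma approx_cauchy i j : (i <= j)%N -> wdiv i (sval (approx j) - sval (approx i)).
Proof.
elim: j => [|j IH]; first by rewrite leqn0 => /eqP ->; rewrite subrr wdiv0.
rewrite leq_eqVlt => /orP [/eqP ->|hij]; first by rewrite subrr wdiv0.
rewrite -(subrKA (sval (approx j))); apply: wdivD; last exact: IH.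
exact: wdiv_mono (ltnW hij) (approx_step j).
Qed.

End Approximation.

(* The ray (x_n)_{n >= 0} is the sequence of classes of P D(n) for one
   invertible P: take P = R L(l) with l the limit of the approximations. *)
Lemma standard_ray : exists P, P \in unitmx /\ forall m : nat, inV (x m) (P *m D m).
Proof.
have [R [hR hR1]] := ray_start.
have [l hl] := w_adic_limit (approx_cauchy hR hR1).
exists (R *m Lmx l); split; first by rewrite unitmx_mul hR L_unit.
move=> m; set s := sval (approx hR hR1 m).
have := inV_GL (Lmx ((l - s) / w ^+ m)) (svalP (approx hR hR1 m) m (leqnSn m)) (GL2o_L (hl m)).
by rewrite -!mulmxA LD (mulmxA (Lmx _)) LL mulrC divfK ?expf_neq0 // addrC subrK mulmxA.
Qed.

Lemma upper_fixes_end {P p q r} : P \in unitmx -> (forall m : nat, inV (x m) (P *m D m)) ->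
  p != 0 -> r != 0 -> fixes_end F val x (act (P *m mx2 p q 0 r *m invmx P)).
Proof.
move=> hP hxP hp hr; have [a [b hab]] := upper_shifts_ray q hp hr.
have hB : P *m mx2 p q 0 r *m invmx P \in unitmx.
  by rewrite !unitmx_mul hP unitmx_inv hP mx2_unit mulr0 subr0 mulf_neq0.
exists a, b => n; have [V0 [hV eV]] := hab n; have [V' [hV' eV']] := GL2o_inv hV.
have e : P *m mx2 p q 0 r *m invmx P *m (P *m D (n + a)) = p *: (P *m D (n + b) *m V0).
  by rewrite -!mulmxA (mulmxA (invmx P)) mulVmx // mul1mx eV -scalemxAr.
have := act_inV hB (hxP (n + a)%N); rewrite e => /(inV_unscale p hp) /(inV_GL V' ^~ hV').
by rewrite -!mulmxA eV' mulmx1 => h; exact: v_eq h (hxP (n + b)%N).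
Qed.

(* Every vertex z is moved to x_0 by an element of PGL_2(F) fixing omega:
   writing z = P T x_0 with T upper triangular (Iwasawa), take P T^-1 P^-1. *)
Lemma borel_transport z : exists B,
  [/\ B \in unitmx, act B z = x 0 & fixes_end F val x (act B)].
Proof.
have [P [hP hxP]] := standard_ray.
have [N [hN hzN]] := v_rep z.
have hPN : invmx P *m N \in unitmx by rewrite unitmx_mul unitmx_inv hP hN.
have [W [p [q [r [hW hp hr e]]]]] := iwasawa hPN.
set Ti := mx2 p^-1 (- q / (p * r)) 0 r^-1.
have eTi : Ti *m mx2 p q 0 r = 1%:M.
  by rewrite /Ti mx2_mul mx2_1; congr mx2; field; rewrite ?hp ?hr.
have hB : P *m Ti *m invmx P \in unitmx.
  by rewrite !unitmx_mul hP unitmx_inv hP mx2_unit mulr0 subr0 mulf_neq0 ?invr_eq0.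
exists (P *m Ti *m invmx P); split => //; last exact: upper_fixes_end hP hxP (invr_neq0 hp) (invr_neq0 hr).
apply: v_eq (act_inV hB (inV_GL W hzN hW)) _.
by rewrite -!mulmxA (mulmxA (invmx P)) e eTi mulmx1; have := hxP 0%N; rewrite D0 mulmx1.
Qed.

End Apartment.

End BruhatTitsTree.

Theorem mainTheorem9 (F : fieldType) (val : F -> int) (varpi : F)
  (hF : is_nonarch_local_field F val) (hvarpi : varpi != 0 /\ val varpi = 1)
  (e : nat) (he : (1 <= e)%N)
  (x : int -> vertex F val) (hx : biinf_path F val varpi x)
  (g : vertex F val -> vertex F val) (hg : in_Ghat F val varpi e g) :
  exists k b : vertex F val -> vertex F val,
    [/\ in_Ghat F val varpi e k, k (x 0) = x 0,
        in_Ghat F val varpi e b, fixes_end F val x b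
      & forall y, g y = k (b y)].
Proof.
have [val_mul val_ultra _ complete _] := hF; have [w0 vw] := hvarpi.
have [[[ginv _ hKg] _] _] := hg.
(* b is an element B of PGL_2(F) fixing omega and sending g^-1(x_0) to x_0,
   and k = g B^-1 *)
have [B [hB hBz hBend]] := borel_transport val_mul val_ultra w0 vw complete hx (ginv (x 0)).
exists (fun y => g (act (invmx B) y)), (act B); split => //.
- by apply: Ghat_comp_act hg _; rewrite unitmx_inv.
- by rewrite -hBz act_invK // hKg.
- exact: act_Ghat.
- by move=> y; rewrite act_invK.
Qed.
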